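(* Let $\Gamma$ be a finite graph with vertices $v_1,\dots,v_n$ ($n\ge2$) and edges $e_1,\dots,e_m$ with edge dimensions $\vec e=(e_1,\dots,e_m)$, and let $V_1,\dots,V_n$ be complex vector spaces, $\dim V_j=\mathbf v_j$. Suppose $v_1$ has valence one and is joined by the edge $e_1$ to $v_2$, and suppose $\mathbf v_1\le e_1$. Let $\tilde\Gamma$ be the graph obtained from $\Gamma$ by deleting $v_1$ and $e_1$, with the remaining edges keeping their dimensions $\vec{\tilde e}=(e_2,\dots,e_m)$, and attach $\tilde V_1:=V_1\otimes V_2$ to the vertex $v_2$ and $V_j$ to $v_j$ for $j\ge3$. Then, under the natural identification $V_1\otimes\cdots\otimes V_n=\tilde V_1\otimes V_3\otimes\cdots\otimes V_n$, $$TNS(\Gamma,\vec e,V_1\otimes\cdots\otimes V_n)=TNS(\tilde\Gamma,\vec{\tilde e},\tilde V_1\otimes V_3\otimes\cdots\otimes V_n).$$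
   Context: Tensor network states: for a finite graph with vector spaces $W_j$ attached to vertices and complex vector spaces $E_s$ of dimension $e_s$ attached to edges (edges oriented arbitrarily), $TNS(\Gamma,\vec e,W_1\otimes\cdots\otimes W_k)$ is the set of tensors $T\in W_1\otimes\cdots\otimes W_k$ such that there are $T_j\in W_j\otimes(\bigotimes_{s\text{ entering }v_j}E_s)\otimes(\bigotimes_{t\text{ leaving }v_j}E_t^* )$ with $T=\mathrm{Con}(T_1\otimes\cdots\otimes T_k)$, where $\mathrm{Con}$ contracts every $E_s$ with $E_s^*$. *)

From HB Require Import structures.
From mathcomp Require Import all_boot all_algebra.
From mathcomp Require Import reals complex.

Set Implicit Arguments.
Unset Strict Implicit.
Unset Printing Implicit Defensive.
Import GRing.Theory.
Local Open Scope ring_scope.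

(* Basis indices of a tensor product of spaces of dimensions w j (j < k):
   a multi-index picks one basis index in each factor. *)
Definition multi_index (k : nat) (w : 'I_k -> nat) :=
  {dffun forall j : 'I_k, 'I_(w j)}.

Definition edge_label (m : nat) (e : 'I_m -> nat) :=
  {dffun forall s : 'I_m, 'I_(e s)}.

(* A tensor T (in coordinates) of W_1 ⊗ ... ⊗ W_k lies in TNS iff there are
   vertex tensors T_j in W_j ⊗ (⊗_{s incident to v_j} E_s or E_s^* ), i.e.
   functions of the W_j index and of the indices of the edges incident to v_j
   (encoded as functions of a global edge labelling depending only on the
   incident edges), such that T = Con(T_1 ⊗ ... ⊗ T_k): contracting every
   E_s with E_s^* is summing over a common index for edge s. *)
Definition TNS (K : fieldType) (k m : nat) (src tgt : 'I_m -> 'I_k)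
  (e : 'I_m -> nat) (w : 'I_k -> nat) (T : multi_index w -> K) : Prop :=
  exists Tv : forall j : 'I_k, 'I_(w j) -> edge_label e -> K,
    (forall (j : 'I_k) (a : 'I_(w j)) (f g : edge_label e),
        (forall s : 'I_m, (src s == j) || (tgt s == j) -> f s = g s) ->
        Tv j a f = Tv j a g) /\
    (forall a : multi_index w,
        T a = \sum_(f : edge_label e) \prod_(j : 'I_k) Tv j (a j) f).

(* vertex v_2 (0-based index 1) *)
Definition vtx1 {n : nat} : 'I_n.+2 := lift ord0 ord0.

(* The reduced graph: vertex j of the new graph is vertex (lift ord0 j) = j+1
   of the old one (so new vertex 0 is old v_2); new edge s is old edge s+1. *)
Definition tvert {n : nat} (u : 'I_n.+2) : 'I_n.+1 := inord (val u).-1.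
Definition tsrc {n m : nat} (src : 'I_m.+1 -> 'I_n.+2) (s : 'I_m) : 'I_n.+1 :=
  tvert (src (lift ord0 s)).
Definition te {m : nat} (e : 'I_m.+1 -> nat) (s : 'I_m) : nat := e (lift ord0 s).
Definition tw {n : nat} (v : 'I_n.+2 -> nat) (j : 'I_n.+1) : nat :=
  if j == ord0 then v ord0 * v vtx1 else v (lift ord0 j).

(* Natural identification V_1 ⊗ ... ⊗ V_n = (V_1 ⊗ V_2) ⊗ V_3 ⊗ ... ⊗ V_n on
   basis multi-indices: (a_1, a_2) <-> a_1 * dim V_2 + a_2, others unchanged. *)
Definition tcorr {n : nat} (v : 'I_n.+2 -> nat)
  (a : multi_index v) (b : multi_index (tw v)) : Prop :=
  val (b ord0) = (val (a ord0) * v vtx1 + val (a vtx1))%N /\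
  (forall j : 'I_n.+1, j != ord0 -> val (b j) = val (a (lift ord0 j))).

From HB Require Import structures.
From mathcomp Require Import all_boot all_algebra.
From mathcomp Require Import reals complex.
From mathcomp Require Import zify.

Set Implicit Arguments.
Unset Strict Implicit.
Unset Printing Implicit Defensive.
Import GRing.Theory.
Local Open Scope ring_scope.

(* Contracting the leaf tensor T_1 in V_1 (x) E_1^* with T_2 along e_1 gives a
   tensor in (V_1 (x) V_2) (x) (the other edge spaces at v_2), that is, a vertex
   tensor of the reduced graph at v_2.  Conversely, as dim V_1 <= e_1 we may
   take T_1 to be an inclusion V_1 -> E_1, i.e. a Kronecker delta between the
   indices of V_1 and E_1, and let T_2 be the reduced tensor at v_2 with its
   V_1 index read off the E_1 index.  If e_1 = 0 then V_1 = 0, so both tensor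
   products are zero and both memberships hold trivially. *)

Lemma tvert_val n (u : 'I_n.+2) : val (tvert u) = (val u).-1.
Proof. by rewrite /tvert /= inordK //; have := ltn_ord u; lia. Qed.

Lemma tvert_lift n (j : 'I_n.+1) : tvert (lift ord0 j) = j.
Proof. by apply/val_inj; rewrite tvert_val. Qed.

Lemma tvert0 n : tvert (ord0 : 'I_n.+2) = ord0.
Proof. by apply/val_inj; rewrite tvert_val. Qed.

Lemma tvert_vtx1 n : tvert (vtx1 : 'I_n.+2) = ord0.
Proof. by apply/val_inj; rewrite tvert_val. Qed.

Lemma vtx1_neq0 n : (vtx1 : 'I_n.+2) != ord0.
Proof. by rewrite lift_eqF. Qed.

Lemma lift_tvert n (u : 'I_n.+2) : u != ord0 -> lift ord0 (tvert u) = u.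
Proof.
case: u => [[|k] hk] // _; apply/val_inj.
by rewrite /= tvert_val /bump /=; lia.
Qed.

Lemma tvert_inj n (u w : 'I_n.+2) : u != ord0 -> w != ord0 ->
  (tvert u == tvert w) = (u == w).
Proof.
move=> u0 w0; apply/eqP/eqP => [eq_uw|-> //].
by rewrite -(lift_tvert u0) -(lift_tvert w0) eq_uw.
Qed.

Lemma tw_lift n (v : 'I_n.+2 -> nat) (j : 'I_n.+1) :
  j != ord0 -> tw v j = v (lift ord0 j).
Proof. by rewrite /tw => /negbTE ->. Qed.

Lemma tcorr_merge n (v : 'I_n.+2 -> nat) (a : multi_index v) :
  exists b : multi_index (tw v), tcorr a b.
Proof.
pose b j := if j == ord0 then (val (a ord0) * v vtx1 + val (a vtx1))%N
            else val (a (lift ord0 j)).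
have lt_b j : (b j < tw v j)%N.
  rewrite /b; case: eqP => [->|/eqP j0]; last by rewrite tw_lift ?ltn_ord.
  by have := ltn_ord (a ord0); have := ltn_ord (a vtx1); rewrite /tw /=; nia.
exists [ffun j => Ordinal (lt_b j)]; split => [|j /negbTE j0].
  by rewrite ffunE /= /b eqxx.
by rewrite ffunE /= /b j0.
Qed.

Lemma tcorr_split n (v : 'I_n.+2 -> nat) (b : multi_index (tw v)) :
  exists a : multi_index v, tcorr a b.
Proof.
have b0_lt : (val (b ord0) < v ord0 * v vtx1)%N := ltn_ord (b ord0).
have v1_gt0 : (0 < v vtx1)%N by move: b0_lt; case: (v vtx1); rewrite ?muln0.
pose a j := if j == ord0 then (val (b ord0) %/ v vtx1)%N
  else if j == vtx1 then (val (b ord0) %% v vtx1)%N else val (b (tvert j)).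
have lt_a j : (a j < v j)%N.
  rewrite /a; case: eqP => [->|/eqP j0]; first by rewrite ltn_divLR.
  case: eqP => [->|/eqP j1]; first by rewrite ltn_mod.
  have tj0 : tvert j != ord0 by rewrite -(tvert_vtx1 n) tvert_inj ?vtx1_neq0.
  by apply: leq_trans (ltn_ord (b (tvert j))) _; rewrite tw_lift // lift_tvert.
exists [ffun j => Ordinal (lt_a j)]; split => [|j j0].
  by rewrite !ffunE /= /a eqxx (negbTE (vtx1_neq0 n)) eqxx -divn_eq.
by rewrite ffunE /= /a lift_eqF (inj_eq lift_inj) (negbTE j0) tvert_lift.
Qed.

Section EdgeLabels.
Variables (m : nat) (e : 'I_m.+1 -> nat).

(* Built through [nat] to avoid casting between ['I_(e ord0)] and ['I_(e s)]. *)
Definition edge_cons_nat (x : 'I_(e ord0)) (f : edge_label (te e)) s : nat :=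
  if unlift ord0 s is Some s' then val (f s') else val x.

Lemma edge_cons_nat_lt x f s : (edge_cons_nat x f s < e s)%N.
Proof. by rewrite /edge_cons_nat; case: unliftP => [s'|] -> /=; apply: ltn_ord. Qed.

Definition edge_cons x f : edge_label e :=
  [ffun s => Ordinal (edge_cons_nat_lt x f s)].

Definition edge_behead (f : edge_label e) : edge_label (te e) :=
  [ffun s => f (lift ord0 s)].

Lemma edge_cons0 x f : edge_cons x f ord0 = x.
Proof. by apply/val_inj; rewrite ffunE /= /edge_cons_nat unlift_none. Qed.

Lemma edge_consS x f s : edge_cons x f (lift ord0 s) = f s.
Proof. by apply/val_inj; rewrite ffunE /= /edge_cons_nat liftK. Qed.

Lemma edge_consK x f : edge_behead (edge_cons x f) = f.
Proof. by apply/ffunP => s; rewrite ffunE edge_consS. Qed.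

Lemma edge_cons_behead (f : edge_label e) : edge_cons (f ord0) (edge_behead f) = f.
Proof.
apply/ffunP => s; apply/val_inj; rewrite ffunE /= /edge_cons_nat.
by case: unliftP => [s'|] -> //=; rewrite ffunE.
Qed.

Lemma sum_edge_cons (V : nmodType) (F : edge_label e -> V) :
  \sum_f F f =
  \sum_(x : 'I_(e ord0)) \sum_(f : edge_label (te e)) F (edge_cons x f).
Proof.
rewrite pair_big /= (reindex (fun p => edge_cons p.1 p.2)) //.
exists (fun f : edge_label e => (f ord0, edge_behead f)) => [[x f] _ | f _] /=.
  by rewrite edge_cons0 edge_consK.
exact: edge_cons_behead.
Qed.

End EdgeLabels.

Section TensorNetworks.
Variables (K : fieldType) (k m : nat) (src tgt : 'I_m -> 'I_k) (e : 'I_m -> nat).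

Definition incident (s : 'I_m) (j : 'I_k) := (src s == j) || (tgt s == j).

Definition edge_local (w : 'I_k -> nat)
    (Tv : forall j : 'I_k, 'I_(w j) -> edge_label e -> K) :=
  forall j a (f g : edge_label e),
    (forall s, incident s j -> f s = g s) -> Tv j a f = Tv j a g.

Definition contraction (w : 'I_k -> nat)
    (Tv : forall j : 'I_k, 'I_(w j) -> edge_label e -> K) (a : multi_index w) :=
  \sum_(f : edge_label e) \prod_(j : 'I_k) Tv j (a j) f.

Lemma TNSP w (T : multi_index w -> K) :
  TNS src tgt e T <->
  exists2 Tv, edge_local Tv & forall a, T a = contraction Tv a.
Proof. by split=> [[Tv [? ?]] | [Tv ? ?]]; exists Tv. Qed.

Lemma TNS_empty w (T : multi_index w -> K) j :
  w j = 0%N -> TNS src tgt e T.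
Proof.
move=> wj0; apply/TNSP; exists (fun _ _ _ => 0) => // a.
by have := ltn_ord (a j); rewrite [X in (_ < X)%N]wj0.
Qed.

End TensorNetworks.

(* [Tv j] read at a plain natural index, and [0] out of range: this lets the
   index arithmetic of [tcorr] cross the dependent types ['I_(w j)]. *)
Definition nat_entry (V : nmodType) k (w : 'I_k -> nat) (L : Type)
    (Tv : forall j : 'I_k, 'I_(w j) -> L -> V) j (x : nat) (f : L) : V :=
  if insub x is Some c then Tv j c f else 0.

Lemma nat_entry_val (V : nmodType) k (w : 'I_k -> nat) L
    (Tv : forall j : 'I_k, 'I_(w j) -> L -> V) j (c : 'I_(w j)) f :
  nat_entry Tv j (val c) f = Tv j c f.
Proof. by rewrite /nat_entry valK. Qed.

Lemma eq_nat_entry (V : nmodType) k (w : 'I_k -> nat) L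
    (Tv : forall j : 'I_k, 'I_(w j) -> L -> V) j x f g :
  (forall c, Tv j c f = Tv j c g) -> nat_entry Tv j x f = nat_entry Tv j x g.
Proof. by rewrite /nat_entry; case: insub. Qed.

Section LeafReduction.
Variables (K : fieldType) (n m : nat).
Variables (src tgt : 'I_m.+1 -> 'I_n.+2) (e : 'I_m.+1 -> nat) (v : 'I_n.+2 -> nat).
Hypothesis leaf_edge : ((src ord0 == ord0) && (tgt ord0 == vtx1))
                    || ((src ord0 == vtx1) && (tgt ord0 == ord0)).
Hypothesis leaf_valence1 :
  forall s : 'I_m.+1, s != ord0 -> (src s != ord0) && (tgt s != ord0).

Lemma incident_leaf_edge u : incident src tgt ord0 u = (u == ord0) || (u == vtx1).
Proof.
by rewrite /incident; case/orP: leaf_edge => /andP[/eqP-> /eqP->];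
  rewrite ?(eq_sym u) // orbC.
Qed.

Lemma incident_lift0F s : incident src tgt (lift ord0 s) ord0 = false.
Proof.
have /andP[/negbTE src0 /negbTE tgt0] := leaf_valence1 (negbT (lift_eqF ord0 s)).
by rewrite /incident src0 tgt0.
Qed.

Lemma incident_tvert s u : u != ord0 ->
  incident (tsrc src) (tsrc tgt) s (tvert u) = incident src tgt (lift ord0 s) u.
Proof.
have /andP[src0 tgt0] := leaf_valence1 (negbT (lift_eqF ord0 s)).
by move=> u0; rewrite /incident /tsrc !tvert_inj.
Qed.

Lemma edge_local_cons w (Tv : forall j : 'I_n.+2, 'I_(w j) -> edge_label e -> K)
    u c x (f g : edge_label (te e)) :
  edge_local src tgt Tv ->
  (forall s, incident (tsrc src) (tsrc tgt) s (tvert u) -> f s = g s) ->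
  Tv u c (edge_cons x f) = Tv u c (edge_cons x g).
Proof.
move=> Tv_loc fg; apply: Tv_loc => s'; case: (unliftP ord0 s') => [s|] -> inc_s.
  rewrite !edge_consS fg // incident_tvert //.
  by apply: contraTneq inc_s => ->; rewrite incident_lift0F.
by rewrite !edge_cons0.
Qed.

Lemma edge_local_behead w
    (Tv : forall j : 'I_n.+1, 'I_(w j) -> edge_label (te e) -> K)
    u x (f g : edge_label e) :
  edge_local (tsrc src) (tsrc tgt) Tv -> u != ord0 ->
  (forall s, incident src tgt s u -> f s = g s) ->
  nat_entry Tv (tvert u) x (edge_behead f) =
  nat_entry Tv (tvert u) x (edge_behead g).
Proof.
move=> Tv_loc u0 fg; apply: eq_nat_entry => c; apply: Tv_loc => s inc_s.
by rewrite !ffunE fg -?incident_tvert.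
Qed.

Lemma leaf_label_irrelevant w
    (Tv : forall j : 'I_n.+2, 'I_(w j) -> edge_label e -> K)
    u c x y f :
  edge_local src tgt Tv -> u != ord0 -> u != vtx1 ->
  Tv u c (edge_cons x f) = Tv u c (edge_cons y f).
Proof.
move=> Tv_loc /negbTE u0 /negbTE u1; apply: Tv_loc => s'.
case: (unliftP ord0 s') => [s|] ->; first by rewrite !edge_consS.
by rewrite incident_leaf_edge u0 u1.
Qed.

(* [x0] labels the deleted edge for the vertices that do not see it; by
   locality its value does not matter. *)
Definition merge_leaf (Tv : forall j : 'I_n.+2, 'I_(v j) -> edge_label e -> K)
    (x0 : 'I_(e ord0)) (j : 'I_n.+1) (b : 'I_(tw v j)) (f : edge_label (te e)) :=
  if j == ord0 then
    \sum_(x : 'I_(e ord0)) nat_entry Tv ord0 (b %/ v vtx1) (edge_cons x f)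
                          * nat_entry Tv vtx1 (b %% v vtx1) (edge_cons x f)
  else nat_entry Tv (lift ord0 j) b (edge_cons x0 f).

Lemma merge_leaf_local Tv x0 :
  edge_local src tgt Tv -> edge_local (tsrc src) (tsrc tgt) (merge_leaf Tv x0).
Proof.
move=> Tv_loc j b f g fg; rewrite /merge_leaf; case: eqP => [j0|_].
  apply: eq_bigr => x _; congr (_ * _); apply: eq_nat_entry => c;
    apply: edge_local_cons => // s; rewrite ?tvert0 ?tvert_vtx1 -j0; exact: fg.
apply: eq_nat_entry => c; apply: edge_local_cons => // s.
by rewrite tvert_lift; apply: fg.
Qed.

Lemma merge_leaf_contraction Tv x0 a b :
  edge_local src tgt Tv -> tcorr a b ->
  contraction Tv a = contraction (merge_leaf Tv x0) b.
Proof.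
move=> Tv_loc [b0 bj].
have v1_gt0 : (0 < v vtx1)%N by apply: leq_ltn_trans (ltn_ord (a vtx1)).
have b0_div : (val (b ord0) %/ v vtx1)%N = a ord0.
  by rewrite b0 divnMDl // divn_small ?addn0 ?ltn_ord.
have b0_mod : (val (b ord0) %% v vtx1)%N = a vtx1.
  by rewrite b0 modnMDl modn_small ?ltn_ord.
rewrite /contraction sum_edge_cons exchange_big /=; apply: eq_bigr => f _.
rewrite [RHS]big_ord_recl /merge_leaf eqxx b0_div b0_mod mulr_suml.
apply: eq_bigr => x _; rewrite !nat_entry_val !big_ord_recl mulrA; congr (_ * _).
apply: eq_bigr => i _; rewrite bj ?lift_eqF // nat_entry_val.
by apply: leaf_label_irrelevant; rewrite ?lift_eqF // (inj_eq lift_inj) lift_eqF.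
Qed.

Definition split_leaf
    (Tv : forall j : 'I_n.+1, 'I_(tw v j) -> edge_label (te e) -> K)
    (u : 'I_n.+2) (c : 'I_(v u)) (f : edge_label e) : K :=
  if u == ord0 then (if val (f ord0) == val c then 1 else 0)
  else if u == vtx1 then
    nat_entry Tv ord0 (val (f ord0) * v vtx1 + val c) (edge_behead f)
  else nat_entry Tv (tvert u) (val c) (edge_behead f).

Lemma split_leaf_local Tv :
  edge_local (tsrc src) (tsrc tgt) Tv -> edge_local src tgt (split_leaf Tv).
Proof.
move=> Tv_loc u c f g fg.
have fg0 : (u == ord0) || (u == vtx1) -> f ord0 = g ord0.
  by move=> u01; apply: fg; rewrite incident_leaf_edge.
rewrite /split_leaf; case: ifP => [u0|/negbT u0]; first by rewrite fg0 ?u0.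
case: ifP => [u1|_]; last exact: edge_local_behead.
rewrite fg0 ?u1 ?orbT // -(tvert_vtx1 n) -(eqP u1).
exact: edge_local_behead.
Qed.

Lemma split_leaf_contraction Tv a b :
  (v ord0 <= e ord0)%N -> tcorr a b ->
  contraction (split_leaf Tv) a = contraction Tv b.
Proof.
move=> v0_le_e0 [b0 bj].
have a0_lt : (val (a ord0) < e ord0)%N by apply: leq_trans (ltn_ord _) v0_le_e0.
rewrite /contraction sum_edge_cons (bigD1 (Ordinal a0_lt)) //=.
rewrite [X in _ + X]big1 ?addr0 => [|x /eqP xa].
  apply: eq_bigr => f _; rewrite !big_ord_recl /split_leaf eqxx edge_cons0 /=.
  rewrite eqxx mul1r edge_consK -b0 nat_entry_val; congr (_ * _).
  by apply: eq_bigr => i _; rewrite tvert_lift -bj ?lift_eqF // nat_entry_val.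
apply: big1 => f _; rewrite big_ord_recl /split_leaf eqxx.
rewrite edge_cons0; case: eqP => [xa'|_]; last by rewrite mul0r.
by case: xa; apply/val_inj.
Qed.

Lemma TNS_merge_leaf (T : multi_index v -> K) (X : multi_index (tw v) -> K) :
  (0 < e ord0)%N -> (forall a b, tcorr a b -> T a = X b) ->
  TNS src tgt e T -> TNS (tsrc src) (tsrc tgt) (te e) X.
Proof.
move=> e0_gt0 TX /TNSP[Tv Tv_loc TE]; apply/TNSP.
exists (merge_leaf Tv (Ordinal e0_gt0)); first exact: merge_leaf_local.
move=> b; have [a ab] := tcorr_split b.
by rewrite -(TX a b ab) TE (merge_leaf_contraction (Ordinal e0_gt0) Tv_loc ab).
Qed.

Lemma TNS_split_leaf (T : multi_index v -> K) (X : multi_index (tw v) -> K) :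
  (v ord0 <= e ord0)%N -> (forall a b, tcorr a b -> T a = X b) ->
  TNS (tsrc src) (tsrc tgt) (te e) X -> TNS src tgt e T.
Proof.
move=> v0_le_e0 TX /TNSP[Tv Tv_loc XE]; apply/TNSP.
exists (split_leaf Tv); first exact: split_leaf_local.
move=> a; have [b ab] := tcorr_merge a.
by rewrite (TX a b ab) XE (split_leaf_contraction _ v0_le_e0 ab).
Qed.

End LeafReduction.

Theorem proposition6p1 (R : realType) (n m : nat)
  (src tgt : 'I_m.+1 -> 'I_n.+2) (e : 'I_m.+1 -> nat) (v : 'I_n.+2 -> nat)
  (Hjoin : ((src ord0 == ord0) && (tgt ord0 == vtx1))
        || ((src ord0 == vtx1) && (tgt ord0 == ord0)))
  (Hval : forall s : 'I_m.+1, s != ord0 -> (src s != ord0) && (tgt s != ord0))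
  (Hdim : (v ord0 <= e ord0)%N)
  (T : multi_index v -> R[i]) (X : multi_index (tw v) -> R[i])
  (Hid : forall a b, tcorr a b -> T a = X b) :
  @TNS _ _ _ src tgt e v T <-> @TNS _ _ _ (tsrc src) (tsrc tgt) (te e) (tw v) X.
Proof.
have [e0_eq0 | e0_gt0] := posnP (e ord0).
  have v0_eq0 : v ord0 = 0%N by apply/eqP; rewrite -leqn0 -e0_eq0.
  by split=> _; [apply: (TNS_empty _ _ _ _ (j := ord0)); rewrite /tw eqxx v0_eq0
                | apply: (TNS_empty _ _ _ _ v0_eq0)].
by split; [apply: TNS_merge_leaf | apply: TNS_split_leaf].
Qed.
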